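(* Let $\ell_1,\ldots,\ell_4$ be four distinct lines in $\mathbb{R}^2$ given by $L_i=0$, where $L_i=A_ix+B_iy+C_i$ (real coefficients, $(A_i,B_i)\neq(0,0)$), $i=1,\ldots,4$. Assume that no two of $\ell_1,\ell_2,\ell_3$ are parallel and that $\ell_4$ is parallel to neither $\ell_1$ nor $\ell_2$. Let $f(x,y)=L_1L_2L_3+L_4$ and let $\Gamma$ be the real algebraic cubic curve $f(x,y)=0$. Then $f$ is irreducible, and $\Gamma$ is asymptotic to each of the lines $\ell_1,\ell_2,\ell_3$. *)

From HB Require Import structures.
From mathcomp Require Import all_boot all_order all_algebra.
From mathcomp Require Import all_classical all_reals all_analysis.
Set Implicit Arguments. Unset Strict Implicit. Unset Printing Implicit Defensive.
Import Order.TTheory GRing.Theory Num.Theory.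
Import numFieldNormedType.Exports.
Local Open Scope ring_scope.
Local Open Scope classical_set_scope.

(* Bivariate polynomials R[x,y] are represented as {poly {poly R}}:
   the inner variable is x, the outer variable is y. *)
Definition eval2 {R : ringType} (p : {poly {poly R}}) (x y : R) : R :=
  (p.[y%:P]).[x].

Definition linpoly {R : ringType} (A B C : R) : {poly {poly R}} :=
  (B%:P)%:P * 'X + (A *: 'X + C%:P)%:P.

Definition const2 {R : ringType} (p : {poly {poly R}}) : Prop :=
  exists c : R, p = c%:P%:P.

(* Irreducibility in R[x,y]: non-constant (in particular nonzero, not a unit),
   and in every factorization one factor is constant (hence a unit). *)
Definition irreducible2 {R : ringType} (p : {poly {poly R}}) : Prop :=
  ~ const2 p /\ forall g h, p = g * h -> const2 g \/ const2 h.

Definition line {R : ringType} (A B C : R) : set (R * R) :=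
  [set p | A * p.1 + B * p.2 + C = 0].

Definition parallel {R : ringType} (A1 B1 A2 B2 : R) : Prop :=
  A1 * B2 = A2 * B1.

Definition dist_line {R : rcfType} (A B C x y : R) : R :=
  `|A * x + B * y + C| / Num.sqrt (A ^+ 2 + B ^+ 2).

(* The zero set {f = 0} is asymptotic to the line (A,B,C): there is a branch,
   i.e. a continuous curve t |-> (gx t, gy t) lying in {f = 0}, going to
   infinity as t -> +oo, whose distance to the line tends to 0. *)
Definition asymptotic_to_line {R : realType} (f : {poly {poly R}}) (A B C : R)
  : Prop :=
  exists gx gy : R -> R,
    continuous gx /\ continuous gy /\
    (forall t, eval2 f (gx t) (gy t) = 0) /\
    ((fun t => `|gx t| + `|gy t|) @ +oo --> +oo) /\
    ((fun t => dist_line A B C (gx t) (gy t)) @ +oo --> 0).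

From mathcomp Require Import all_boot all_order all_algebra.
From mathcomp Require Import all_classical all_reals all_analysis.
From mathcomp Require Import ring lra zify.
Import Order.TTheory GRing.Theory Num.Theory.
Import numFieldNormedType.Exports.
Local Open Scope ring_scope.
Local Open Scope classical_set_scope.

(* Irreducibility: after the shear (x, y) |-> (y, x + l y) with l large, the
   lines l1, l2, l3 all have a nonzero y-coefficient, so f is a cubic in y with
   constant leading coefficient and any nontrivial factorization has a factor
   of degree one in y, i.e. f(x, phi(x)) = 0 for a polynomial phi.  But after
   substituting y = phi(x), all but at most one of L1, L2, L3 keep the degree
   max(deg phi, 1) (two exceptions would be parallel lines), so L1 L2 L3 has
   larger degree than L4 unless some L_i(x, phi(x)) vanishes identically; then
   L4(x, phi(x)) vanishes as well and l4 = l_i.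

   Asymptotes: in the affine coordinates u = L1, v = L2 the curve reads
   u v (p u + q v + r) + d u + e v + g = 0 with q <> 0 as l3 is not parallel
   to l1.  For large v this is a quadratic in u with a root u(v) = O(1/v)
   depending continuously on v, and (u(v), v) is a branch of the curve going
   to infinity whose distance |u| / |(A1, B1)| to l1 tends to 0. *)

(** * Bivariate polynomials and the shear *)

Lemma poly_eq0_of_inj_roots (D : idomainType) (p : {poly D}) (r : nat -> D) :
  injective r -> (forall n, root p (r n)) -> p = 0.
Proof.
move=> r_inj p_r; apply: (@roots_geq_poly_eq0 _ p [seq r i | i <- iota 0 (size p)]).
- by apply/allP => _ /mapP [i _ ->].
- by rewrite map_inj_uniq // iota_uniq.
- by rewrite size_map size_iota.
Qed.

Section Eval2.
Variable R : numDomainType.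
Implicit Types (p q : {poly {poly R}}) (x y : R).

Lemma eval2_ext p q : (forall x y, eval2 p x y = eval2 q x y) -> p = q.
Proof.
have natr_inj : injective (fun n : nat => n%:R : R).
  by move=> m n /eqP; rewrite eqr_nat => /eqP.
move=> epq; apply/eqP; rewrite -subr_eq0; apply/eqP.
apply: (@poly_eq0_of_inj_roots _ _ (fun n => n%:R%:P)).
  by move=> m n /polyC_inj /natr_inj.
move=> m; apply/eqP; apply: (@poly_eq0_of_inj_roots _ _ _ natr_inj) => n.
by apply/eqP; have := epq n%:R m%:R; rewrite /eval2 !hornerE => ->; rewrite subrr.
Qed.

Lemma eval2D p q x y : eval2 (p + q) x y = eval2 p x y + eval2 q x y.
Proof. by rewrite /eval2 !hornerD. Qed.

Lemma eval2M p q x y : eval2 (p * q) x y = eval2 p x y * eval2 q x y.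
Proof. by rewrite /eval2 !hornerM. Qed.

Lemma eval2C (c : R) x y : eval2 c%:P%:P x y = c.
Proof. by rewrite /eval2 !hornerC. Qed.

Lemma eval2_linpoly (A B C : R) x y : eval2 (linpoly A B C) x y = A * x + B * y + C.
Proof. by rewrite /eval2 /linpoly !(hornerD, hornerM, hornerC, hornerX, hornerZ); ring. Qed.

Lemma horner_horner_polyC p (r : {poly R}) x : (p.[r]).[x] = (p.[r.[x]%:P]).[x].
Proof.
elim/poly_ind: p => [|p c IH]; first by rewrite !horner0.
by rewrite !(hornerE, hornerM) IH.
Qed.

Lemma eval2_swapXY p x y : eval2 (swapXY p) x y = eval2 p y x.
Proof.
elim/poly_ind: p => [|p c IH]; first by rewrite raddf0 /eval2 !horner0.
rewrite rmorphD rmorphM /= swapXY_X swapXY_polyC !eval2D !eval2M IH.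
congr (_ + _); last by rewrite /eval2 horner_map /= !hornerC.
by congr (_ * _); rewrite /eval2 !(hornerC, hornerX).
Qed.

End Eval2.

Section Shear.
Variables (R : numDomainType) (l : R).

(* [shear l p] is [p] in the coordinates [(y, x + l y)]. *)
Definition shear (p : {poly {poly R}}) : {poly {poly R}} :=
  swapXY (p \Po ('X + (l *: 'X)%:P)).

Lemma eval2_shear p x y : eval2 (shear p) x y = eval2 p y (x + l * y).
Proof.
by rewrite /shear eval2_swapXY /eval2 horner_comp horner_horner_polyC !hornerE.
Qed.

Lemma shearD p q : shear (p + q) = shear p + shear q.
Proof. by rewrite /shear comp_polyD rmorphD. Qed.

Lemma shearM p q : shear (p * q) = shear p * shear q.
Proof. by rewrite /shear comp_polyM rmorphM. Qed.

Lemma shear_linpoly (A B C : R) : shear (linpoly A B C) = linpoly B (A + B * l) C.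
Proof. by apply: eval2_ext => x y; rewrite eval2_shear !eval2_linpoly; ring. Qed.

Lemma const2_shear p : const2 p <-> const2 (shear p).
Proof.
split=> -[c pc]; exists c; apply: eval2_ext => x y.
  by rewrite eval2_shear pc !eval2C.
have := congr1 (fun q => eval2 q (y - l * x) x) pc.
by rewrite /= eval2_shear subrK eval2C => ->; rewrite eval2C.
Qed.

Lemma irreducible2_shear p : irreducible2 (shear p) -> irreducible2 p.
Proof.
move=> [ncst irr]; split; first by rewrite const2_shear.
move=> g h pgh; rewrite !(const2_shear g) !(const2_shear h).
by apply: irr; rewrite pgh shearM.
Qed.

End Shear.

(** * Irreducibility *)

Lemma root_size2 {D : comUnitRingType} (q : {poly D}) :
  size q = 2 -> lead_coef q \is a GRing.unit -> root q (- (q`_0 / lead_coef q)).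
Proof.
move=> sq lq; have q1 : q`_1 = lead_coef q by rewrite lead_coefE sq.
rewrite /root horner_coef sq !big_ord_recr big_ord0 /= q1 expr0 expr1.
by rewrite add0r mulr1 mulrN mulrC divrK // subrr.
Qed.

Lemma const2_size1 {D : idomainType} (g : {poly {poly D}}) :
  size g = 1 -> lead_coef g \is a GRing.unit -> const2 g.
Proof.
move=> /eqP/size_poly1P [c _ ->]; rewrite lead_coefC poly_unitE.
by move=> /andP [/size_poly1P [a _ ->] _]; exists a.
Qed.

(* With a unit leading coefficient in [y], degrees in [y] add up, so a proper
   factor of a cubic in [y] has degree 1 in [y] and yields a root. *)
Lemma irreducible2_no_root {D : idomainType} (p : {poly {poly D}}) :
  (1 < size p <= 4)%N -> lead_coef p \is a GRing.unit ->
  (forall phi, p.[phi] != 0) -> irreducible2 p.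
Proof.
move=> /andP [sp1 sp4] lp p_noroot; split.
  by move=> [c pc]; move: sp1; rewrite pc size_polyC; case: (c%:P != 0).
move=> g h pgh; have p0 : p != 0 by rewrite -size_poly_gt0 ltnW.
have g0 : g != 0 by apply: contra_neq p0 => g0; rewrite pgh g0 mul0r.
have h0 : h != 0 by apply: contra_neq p0 => h0; rewrite pgh h0 mulr0.
have /andP [lg lh] : (lead_coef g \is a GRing.unit) && (lead_coef h \is a GRing.unit).
  by rewrite -unitrM -lead_coefM -pgh.
have sgh : (size g + size h = (size p).+1)%N.
  rewrite pgh size_mul // prednK //.
  by move: g0; rewrite -size_poly_gt0; case: (size g) => //= n _; rewrite addSn.
have [sg1|sg1] := eqVneq (size g) 1%N; first by left; apply: const2_size1.
have [sh1|sh1] := eqVneq (size h) 1%N; first by right; apply: const2_size1.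
move: g0 h0; rewrite -!size_poly_gt0 => g0 h0.
have [sg2|sg2] := eqVneq (size g) 2%N.
  by have /negP[] := p_noroot (- (g`_0 / lead_coef g));
    rewrite pgh hornerM (rootP (root_size2 g sg2 lg)) mul0r.
have sh2 : size h = 2%N by move: sg1 sh1 sg2 => /eqP ? /eqP ? /eqP ?; lia.
by have /negP[] := p_noroot (- (h`_0 / lead_coef h));
  rewrite pgh hornerM (rootP (root_size2 h sh2 lh)) mulr0.
Qed.

Definition proportional {R : pzRingType} (A B C A' B' C' : R) : Prop :=
  exists k, A' = k * A /\ B' = k * B /\ C' = k * C.

Section LinesAsPolynomials.
Context {F : fieldType}.
Implicit Types (A B C : F) (phi : {poly F}).

Lemma size_linpoly A B C : B != 0 ->
  size (linpoly A B C) = 2%N /\ lead_coef (linpoly A B C) = B%:P.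
Proof.
move=> B0; have sX : size ((B%:P)%:P * 'X : {poly {poly F}}) = 2%N.
  by rewrite size_Cmul ?polyC_eq0 // size_polyX.
have sC : (size ((A *: 'X + C%:P)%:P : {poly {poly F}}) < 2)%N.
  exact: leq_ltn_trans (size_polyC_leq1 _) _.
rewrite /linpoly size_polyDl ?sX // lead_coefDl ?sX //.
by rewrite lead_coefM lead_coefC lead_coefX mulr1.
Qed.

Lemma size_linpoly_le A B C : (size (linpoly A B C) <= 2)%N.
Proof.
rewrite /linpoly; apply: leq_trans (size_polyD _ _) _.
rewrite geq_max (leq_trans (size_polyC_leq1 _)) // andbT.
by apply: leq_trans (size_polyMleq _ _) _; rewrite size_polyX addn2 ltnS size_polyC_leq1.
Qed.

Lemma horner_linpoly A B C phi :
  (linpoly A B C).[phi] = B%:P * phi + (A *: 'X + C%:P).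
Proof. by rewrite /linpoly !(hornerD, hornerM, hornerC, hornerX). Qed.

Lemma size_linear_le (A C : F) : (size (A *: 'X + C%:P : {poly F})%R <= 2)%N.
Proof.
rewrite (leq_trans (size_polyD _ _)) // geq_max (leq_trans (size_polyC_leq1 _)) //.
by rewrite (leq_trans (size_scale_leq _ _)) // size_polyX.
Qed.

Lemma size_linpoly_horner_le A B C phi :
  (size (linpoly A B C).[phi] <= maxn (size phi) 2)%N.
Proof.
rewrite horner_linpoly (leq_trans (size_polyD _ _)) // geq_max !leq_max.
by rewrite mul_polyC size_scale_leq size_linear_le orbT.
Qed.

Lemma size_linpoly_horner A B C phi : B != 0 ->
  size (linpoly A B C).[phi] = maxn (size phi) 2 \/ A + B * phi`_1 = 0.
Proof.
move=> B0; have := size_linpoly_horner_le A B C phi.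
rewrite leq_eqVlt => /orP [/eqP ->|lt_s]; [by left | right; move: lt_s].
rewrite horner_linpoly; have [sphi|_] := ltnP 2 (size phi).
  by rewrite size_polyDl size_Cmul ?ltnn // (leq_ltn_trans (size_linear_le A C)).
by move=> /leq_sizeP/(_ 1%N (leqnn _)); rewrite !coefE /= mulr1 addr0 addrC.
Qed.

Lemma parallel_of_common_root {A B A' B' : F} (m : F) :
  A + B * m = 0 -> A' + B' * m = 0 -> parallel A B A' B'.
Proof.
by rewrite /parallel => /eqP; rewrite addr_eq0 => /eqP -> /eqP; rewrite addr_eq0 => /eqP ->; ring.
Qed.

Lemma proportional_of_common_root {A B C A' B' C' : F} {phi} : B != 0 ->
  (linpoly A B C).[phi] = 0 -> (linpoly A' B' C').[phi] = 0 ->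
  proportional A B C A' B' C'.
Proof.
move=> B0 L0 L'0; set k := B' / B; exists k.
have kB : B' = k * B by rewrite divfK.
have : (linpoly A' B' C').[phi] - k%:P * (linpoly A B C).[phi] =
    (A' - k * A) *: 'X + (C' - k * C)%:P.
  by rewrite !horner_linpoly kB -!mul_polyC !polyCB !polyCM; ring.
rewrite L0 L'0 mulr0 subr0 => /esym/polyP E.
have := E 1%N; have := E 0%N; rewrite !coefE /= mulr1 mulr0 addr0 add0r.
by move=> /eqP; rewrite subr_eq0 => /eqP -> /eqP; rewrite subr_eq0 => /eqP ->.
Qed.

End LinesAsPolynomials.

Lemma mul3D_neq0 {D : idomainType} {n : nat} {p1 p2 p3 q : {poly D}} :
  (1 < n)%N -> size p1 = n -> size p2 = n -> p3 != 0 -> (size q <= n)%N ->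
  p1 * p2 * p3 + q != 0.
Proof.
move=> n1 sp1 sp2 p30 sq.
have [p10 p20] : p1 != 0 /\ p2 != 0 by rewrite -!size_poly_gt0 sp1 sp2; split; lia.
have s123 : size (p1 * p2 * p3) = (n + n + size p3 - 2)%N.
  by rewrite !size_mul ?mulf_neq0 // sp1 sp2; move: p30; rewrite -size_poly_gt0; lia.
have lt_q : (size q < size (p1 * p2 * p3)%R)%N.
  by rewrite s123; move: p30; rewrite -size_poly_gt0; lia.
by rewrite -size_poly_gt0 size_polyDl // s123; lia.
Qed.

Section CubicOfLines.
Variables (F : fieldType) (A1 B1 C1 A2 B2 C2 A3 B3 C3 A4 B4 C4 : F).
Hypotheses (B1_neq0 : B1 != 0) (B2_neq0 : B2 != 0) (B3_neq0 : B3 != 0).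
Hypotheses (np12 : ~ parallel A1 B1 A2 B2) (np13 : ~ parallel A1 B1 A3 B3)
  (np23 : ~ parallel A2 B2 A3 B3).
Hypotheses (npr14 : ~ proportional A1 B1 C1 A4 B4 C4)
  (npr24 : ~ proportional A2 B2 C2 A4 B4 C4)
  (npr34 : ~ proportional A3 B3 C3 A4 B4 C4).

Let f := linpoly A1 B1 C1 * linpoly A2 B2 C2 * linpoly A3 B3 C3 + linpoly A4 B4 C4.

(* Substituting [y = phi(x)], at most one of the first three factors drops
   below the generic degree [max (deg phi) 1], so the cubic term dominates. *)
Lemma cubic_lines_no_root phi : f.[phi] != 0.
Proof.
rewrite hornerD !hornerM.
set q1 := (linpoly A1 _ _).[phi]; set q2 := (linpoly A2 _ _).[phi].
set q3 := (linpoly A3 _ _).[phi]; set q4 := (linpoly A4 _ _).[phi].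
have q4_neq0 (A B C : F) : B != 0 -> ~ proportional A B C A4 B4 C4 ->
    (linpoly A B C).[phi] = 0 -> q4 != 0.
  by move=> B0 npr L0; apply/eqP => L40; exact: npr (proportional_of_common_root B0 L0 L40).
have [q1_0|q1_neq0] := eqVneq q1 0.
  by rewrite q1_0 !mul0r add0r; apply: q4_neq0 npr14 q1_0.
have [q2_0|q2_neq0] := eqVneq q2 0.
  by rewrite q2_0 mulr0 mul0r add0r; apply: q4_neq0 npr24 q2_0.
have [q3_0|q3_neq0] := eqVneq q3 0.
  by rewrite q3_0 mulr0 add0r; apply: q4_neq0 npr34 q3_0.
have n_gt1 : (1 < maxn (size phi) 2)%N by rewrite leq_max orbT.
have s4 := size_linpoly_horner_le A4 B4 C4 phi.
have [s1|r1] := size_linpoly_horner A1 B1 C1 phi B1_neq0.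
  have [s2|r2] := size_linpoly_horner A2 B2 C2 phi B2_neq0.
    exact: mul3D_neq0 n_gt1 s1 s2 q3_neq0 s4.
  have [s3|r3] := size_linpoly_horner A3 B3 C3 phi B3_neq0.
    by rewrite mulrAC; exact: mul3D_neq0 n_gt1 s1 s3 q2_neq0 s4.
  by case: np23; exact: parallel_of_common_root r2 r3.
have [s2|r2] := size_linpoly_horner A2 B2 C2 phi B2_neq0; last first.
  by case: np12; exact: parallel_of_common_root r1 r2.
have [s3|r3] := size_linpoly_horner A3 B3 C3 phi B3_neq0; last first.
  by case: np13; exact: parallel_of_common_root r1 r3.
by rewrite [q1 * q2]mulrC mulrAC; exact: mul3D_neq0 n_gt1 s2 s3 q1_neq0 s4.
Qed.

Lemma irreducible2_cubic_lines : irreducible2 f.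
Proof.
have [s1 l1] := size_linpoly A1 B1 C1 B1_neq0.
have [s2 l2] := size_linpoly A2 B2 C2 B2_neq0.
have [s3 l3] := size_linpoly A3 B3 C3 B3_neq0.
have L_neq0 A B C : size (linpoly A B C) = 2%N -> linpoly A B C != 0.
  by rewrite -size_poly_gt0 => ->.
have s123 : size (linpoly A1 B1 C1 * linpoly A2 B2 C2 * linpoly A3 B3 C3) = 4%N.
  by rewrite !size_mul ?mulf_neq0 ?L_neq0 // s1 s2 s3.
have s4 : (size (linpoly A4 B4 C4) < 4)%N by apply: leq_ltn_trans (size_linpoly_le _ _ _) _.
apply: irreducible2_no_root; first by rewrite /f size_polyDl s123.
  rewrite /f lead_coefDl ?s123 // !lead_coefM l1 l2 l3 -!polyCM.
  by rewrite poly_unitE size_polyC coefC /= unitfE !mulf_neq0.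
exact: cubic_lines_no_root.
Qed.

End CubicOfLines.

Section GeneralPosition.
Variable R : realFieldType.
Implicit Types A B C : R.

Lemma parallel_shear A B A' B' (l : R) :
  parallel B (A + B * l) B' (A' + B' * l) <-> parallel A B A' B'.
Proof.
have key : B * (A' + B' * l) - B' * (A + B * l) = - (A * B' - A' * B) by ring.
rewrite /parallel; split=> /eqP E; apply/eqP.
  by rewrite -subr_eq0 -oppr_eq0 -key subr_eq0.
by rewrite -subr_eq0 key oppr_eq0 subr_eq0.
Qed.

Lemma proportional_shear A B C A' B' C' (l : R) :
  proportional B (A + B * l) C B' (A' + B' * l) C' -> proportional A B C A' B' C'.
Proof.
move=> [k [kB [kA kC]]]; exists k; split=> //.
by move: kA; rewrite kB mulrDr mulrA => /addIr.
Qed.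

Lemma not_proportional_line A B C A' B' C' : (A', B') != (0, 0) ->
  line A B C <> line A' B' C' -> ~ proportional A B C A' B' C'.
Proof.
move=> nz neq [k [kA [kB kC]]]; apply: neq.
have k_neq0 : k != 0 by apply: contra_neq nz => k0; rewrite kA kB k0 !mul0r.
rewrite /line kA kB kC; apply/seteqP; split=> p /=.
  by move=> E; rewrite -!mulrA -mulrDr -mulrDr E mulr0.
by rewrite -!mulrA -mulrDr -mulrDr => /eqP; rewrite mulf_eq0 (negbTE k_neq0) => /eqP.
Qed.

Lemma shear_coef_neq0 A B (l : R) :
  (A, B) != (0, 0) -> `|A / B| < l -> A + B * l != 0.
Proof.
move=> nz lt_l; apply/eqP => E.
have [B0|B_neq0] := eqVneq B 0.
  by move: nz E; rewrite B0 mul0r addr0 => /[swap] ->; rewrite eqxx.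
have : l = - (A / B) by rewrite -(mulKf B_neq0 l) -(addKr A (B * l)) E addr0 mulrN mulrC.
have l_gt0 : 0 < l := le_lt_trans (normr_ge0 _) lt_l.
by move=> lE; move: lt_l; rewrite -normrN -lE gtr0_norm // ltxx.
Qed.

End GeneralPosition.

Lemma irreducible2_cubic_lines_general (R : realFieldType)
    (A1 B1 C1 A2 B2 C2 A3 B3 C3 A4 B4 C4 : R) :
  (A1, B1) != (0, 0) -> (A2, B2) != (0, 0) -> (A3, B3) != (0, 0) ->
  (A4, B4) != (0, 0) ->
  line A1 B1 C1 <> line A4 B4 C4 -> line A2 B2 C2 <> line A4 B4 C4 ->
  line A3 B3 C3 <> line A4 B4 C4 ->
  ~ parallel A1 B1 A2 B2 -> ~ parallel A1 B1 A3 B3 -> ~ parallel A2 B2 A3 B3 ->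
  irreducible2 (linpoly A1 B1 C1 * linpoly A2 B2 C2 * linpoly A3 B3 C3
                + linpoly A4 B4 C4).
Proof.
move=> nz1 nz2 nz3 nz4 d14 d24 d34 np12 np13 np23.
pose l := 1 + `|A1 / B1| + `|A2 / B2| + `|A3 / B3|.
have n1 := normr_ge0 (A1 / B1); have n2 := normr_ge0 (A2 / B2).
have n3 := normr_ge0 (A3 / B3).
have npr A B C : line A B C <> line A4 B4 C4 ->
    ~ proportional B (A + B * l) C B4 (A4 + B4 * l) C4.
  by move=> d /proportional_shear; apply: not_proportional_line.
apply: (@irreducible2_shear _ l); rewrite shearD !shearM !shear_linpoly.
apply: irreducible2_cubic_lines; rewrite ?parallel_shear //; try exact: npr;
  by apply: shear_coef_neq0 => //; rewrite /l; lra.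
Qed.

(** * Asymptotic branches *)

Section QuadraticRoot.
Context {R : realType}.
Implicit Types a b c : R.

(* The root of [a u^2 + b u + c] that stays bounded as [a -> 0], written
   without cancellation: it is [(- b + sqrt (b^2 - 4ac)) / 2a] for [a != 0]. *)
Definition quad_root a b c : R := - (2 * c) / (b + Num.sqrt (b ^+ 2 - 4 * a * c)).

Lemma quad_rootP a b c : 0 < b -> 4 * a * c <= b ^+ 2 ->
  a * quad_root a b c ^+ 2 + b * quad_root a b c + c = 0.
Proof.
move=> b_gt0 disc_ge0; rewrite /quad_root.
have := sqr_sqrtr (_ : 0 <= b ^+ 2 - 4 * a * c); rewrite subr_ge0 => /(_ disc_ge0).
have := sqrtr_ge0 (b ^+ 2 - 4 * a * c).
set q := Num.sqrt _ => q_ge0 qq.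
have den_neq0 : b + q != 0 by rewrite gt_eqF // ltr_pwDl.
have -> : a * (- (2 * c) / (b + q)) ^+ 2 + b * (- (2 * c) / (b + q)) + c =
    c * (4 * a * c - b ^+ 2 + q ^+ 2) / (b + q) ^+ 2 by field.
by rewrite qq addrC addrA subrK subrr mulr0 mul0r.
Qed.

Lemma norm_quad_root_le a b c : 0 < b -> `|quad_root a b c| <= 2 * `|c| / b.
Proof.
move=> b_gt0; rewrite /quad_root; set q := Num.sqrt _.
have den_ge : b <= b + q by rewrite lerDl sqrtr_ge0.
rewrite normrM normfV normrN normrM ger0_norm // (gtr0_norm (lt_le_trans b_gt0 den_ge)).
by rewrite ler_wpM2l ?mulr_ge0 // lef_pV2 ?posrE // (lt_le_trans b_gt0).
Qed.

Lemma continuous_quad_root (a b c : R -> R) : continuous a -> continuous b ->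
  continuous c -> (forall t, 0 < b t) ->
  continuous (fun t => quad_root (a t) (b t) (c t)).
Proof.
move=> ca cb cc b_gt0 t.
have disc_cont := continuousD (continuousM (cb t) (cb t))
  (continuousN (continuousM (continuousM (@cst_continuous R R 4 t) (ca t)) (cc t))).
have den_cont := continuousD (cb t) (continuous_comp disc_cont (@sqrt_continuous R _)).
have den_inv : {for t, continuous
    (fun x => (b x + Num.sqrt (b x ^+ 2 - 4 * a x * c x))^-1)}.
  by apply: (continuousV _ den_cont); rewrite gt_eqF // ltr_pwDl ?sqrtr_ge0.
exact: continuousM (continuousN (continuousM (@cst_continuous R R 2 t) (cc t))) den_inv.
Qed.

End QuadraticRoot.

Lemma norm_affine_le {R : realFieldType} (x y s : R) : 1 <= s ->
  `|x * s + y| <= (`|x| + `|y|) * s.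
Proof.
move=> s_ge1; have s_ge0 : 0 <= s by apply: le_trans s_ge1.
rewrite (le_trans (ler_normD _ _)) // normrM (ger0_norm s_ge0) mulrDl lerD2l.
by rewrite ler_peMr.
Qed.

Lemma continuous_maxr {R : realType} (T : R) : continuous (fun t : R => Num.max t T).
Proof. by move=> t; apply: continuous_max => //; exact: cst_continuous. Qed.

Section CubicBranch.
Context {R : realType}.
Variables a b c d e g : R.
Hypothesis b_gt0 : 0 < b.

(* Beyond [branch_start], [b s^2 / 2] dominates both [c s + d] and, squared,
   [4 a s (e s + g)]. *)
Definition branch_start : R :=
  1 + 2 * (`|c| + `|d|) / b + 16 * `|a| * (`|e| + `|g|) / b ^+ 2.

Section LargeArgument.
Context {s : R}.
Hypothesis s_ge : branch_start <= s.

Lemma branch_start_bounds :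
  [/\ 1 <= s, 2 * (`|c| + `|d|) <= b * s & 16 * `|a| * (`|e| + `|g|) <= b ^+ 2 * s].
Proof.
have b2_gt0 : 0 < b ^+ 2 by rewrite exprn_gt0.
have t1 : 0 <= 2 * (`|c| + `|d|) / b by rewrite divr_ge0 ?mulr_ge0 ?addr_ge0 // ltW.
have t2 : 0 <= 16 * `|a| * (`|e| + `|g|) / b ^+ 2 by rewrite divr_ge0 ?mulr_ge0 ?addr_ge0 // ltW.
move: s_ge; rewrite /branch_start => start_le; split; first by lra.
  by rewrite [b * s]mulrC -ler_pdivrMr //; lra.
by rewrite [b ^+ 2 * s]mulrC -ler_pdivrMr //; lra.
Qed.

Lemma branch_lead_ge : b * s ^+ 2 / 2 <= b * s ^+ 2 + c * s + d.
Proof.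
have [s_ge1 cd_le _] := branch_start_bounds.
have := norm_affine_le c d s s_ge1; have := ler_norm (- (c * s + d)).
rewrite normrN => h1 h2; nra.
Qed.

Lemma branch_disc_ge0 : 4 * (a * s) * (e * s + g) <= (b * s ^+ 2 + c * s + d) ^+ 2.
Proof.
have [s_ge1 _ aeg_le] := branch_start_bounds; have s_ge0 : 0 <= s by lra.
set K := `|a| * (`|e| + `|g|).
have K_ge0 : 0 <= K by rewrite mulr_ge0 ?addr_ge0.
have lhs_le : 4 * (a * s) * (e * s + g) <= 4 * K * s ^+ 2.
  rewrite (le_trans (ler_norm _)) // !normrM (ger0_norm s_ge0) ger0_norm //.
  have := ler_wpM2l (mulr_ge0 (normr_ge0 a) s_ge0) (norm_affine_le e g s s_ge1).
  by rewrite /K; lra.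
have K_le : 4 * K * s ^+ 2 <= (b * s ^+ 2 / 2) ^+ 2.
  have b2_ge0 : 0 <= b ^+ 2 by rewrite exprn_ge0 // ltW.
  have s3_le : s ^+ 3 <= s ^+ 4 by rewrite [s ^+ 4]exprS ler_peMl // exprn_ge0.
  have := ler_wpM2r (exprn_ge0 2 s_ge0) aeg_le; have := ler_wpM2l b2_ge0 s3_le.
  rewrite /K; nra.
have lead_sq : (b * s ^+ 2 / 2) ^+ 2 <= (b * s ^+ 2 + c * s + d) ^+ 2.
  have h_ge0 : 0 <= b * s ^+ 2 / 2 by rewrite divr_ge0 ?mulr_ge0 ?exprn_ge0 // ltW.
  by rewrite lerXn2r ?nnegrE ?branch_lead_ge // (le_trans h_ge0 branch_lead_ge).
exact: le_trans lhs_le (le_trans K_le lead_sq).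
Qed.

End LargeArgument.

Definition branch_v (t : R) : R := Num.max t branch_start.

Definition branch_u (t : R) : R :=
  let v := branch_v t in quad_root (a * v) (b * v ^+ 2 + c * v + d) (e * v + g).

Lemma branch_v_ge t : branch_start <= branch_v t.
Proof. by rewrite le_max lexx orbT. Qed.

Lemma branch_lead_gt0 t : 0 < b * branch_v t ^+ 2 + c * branch_v t + d.
Proof.
have [v_ge1 _ _] := branch_start_bounds (branch_v_ge t).
apply: lt_le_trans (branch_lead_ge (branch_v_ge t)).
by rewrite divr_gt0 // mulr_gt0 // exprn_gt0 // (lt_le_trans ltr01).
Qed.

Lemma branch_eq t : let u := branch_u t in let v := branch_v t in
  u * v * (a * u + b * v + c) + d * u + e * v + g = 0.
Proof.
have := quad_rootP (a * branch_v t) _ (e * branch_v t + g) (branch_lead_gt0 t).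
rewrite branch_disc_ge0 ?branch_v_ge // => /(_ isT) <-.
by rewrite /branch_u /=; ring.
Qed.

Lemma continuous_branch_v : continuous branch_v.
Proof. exact: continuous_maxr. Qed.

Lemma continuous_branch_u : continuous branch_u.
Proof.
have cv := continuous_branch_v.
have cst (k : R) : continuous (fun _ : R => k) by move=> ?; exact: cst_continuous.
apply: (@continuous_quad_root _ (fun t => a * branch_v t)
    (fun t => b * branch_v t ^+ 2 + c * branch_v t + d) (fun t => e * branch_v t + g))
  branch_lead_gt0 => t.
- exact: continuousM (cst a t) (cv t).
- exact: continuousD (continuousD (continuousM (cst b t) (continuousM (cv t) (cv t)))
    (continuousM (cst c t) (cv t))) (cst d t).
- exact: continuousD (continuousM (cst e t) (cv t)) (cst g t).
Qed.

Lemma branch_v_cvg : branch_v x @[x --> +oo] --> +oo.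
Proof. by apply: (ger_cvgy _ cvg_id); apply: nearW => t; rewrite le_max lexx. Qed.

Lemma branch_u_le t : `|branch_u t| <= 4 * (`|e| + `|g|) / b * (branch_v t)^-1.
Proof.
set v := branch_v t; have v_start : branch_start <= v := branch_v_ge t.
have [v_ge1 _ _] := branch_start_bounds v_start.
have u_le : `|branch_u t| * (b * v ^+ 2 + c * v + d) <= 2 * `|e * v + g|.
  rewrite -ler_pdivlMr ?branch_lead_gt0 //.
  exact: (norm_quad_root_le (a * v) _ (e * v + g) (branch_lead_gt0 t)).
have := branch_lead_ge v_start; have := norm_affine_le e g v v_ge1.
have := normr_ge0 (branch_u t).
rewrite ler_pdivlMr ?(lt_le_trans ltr01) // ler_pdivlMr //.
nra.
Qed.

Lemma branch_u_cvg : branch_u x @[x --> +oo] --> 0.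
Proof.
apply: norm_cvg0; apply: (@squeeze_cvgr _ _ _ _ (fun=> 0)
  (fun t => 4 * (`|e| + `|g|) / b * (branch_v t)^-1)).
- by apply: nearW => t; rewrite normr_ge0 branch_u_le.
- exact: cvg_cst.
rewrite -[X in _ --> X](mulr0 (4 * (`|e| + `|g|) / b)); apply: cvgMl_tmp.
apply/gtr0_cvgV0; last exact: branch_v_cvg.
apply: nearW => t; have [v_ge1 _ _] := branch_start_bounds (branch_v_ge t).
exact: lt_le_trans v_ge1.
Qed.

End CubicBranch.

Lemma exists_cubic_branch {R : realType} (a b c d e g : R) : b != 0 ->
  exists u v : R -> R, [/\ continuous u, continuous v,
    v x @[x --> +oo] --> +oo, u x @[x --> +oo] --> 0 &
    forall t, u t * v t * (a * u t + b * v t + c) + d * u t + e * v t + g = 0].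
Proof.
wlog b_gt0 : a b c d e g / 0 < b => [branch b_neq0|_].
  move: (b_neq0); rewrite neq_lt => /orP [b_lt0|b_gt0]; last exact: branch.
  have := branch (- a) (- b) (- c) (- d) (- e) (- g).
  rewrite oppr_gt0 oppr_eq0 => /(_ b_lt0 b_neq0) [u [v [cu cv v_cvg u_cvg uv_eq]]].
  exists u, v; split=> // t; apply/eqP; rewrite -oppr_eq0 -(uv_eq t); apply/eqP; ring.
exists (branch_u a b c d e g), (branch_v a b c d e g); split.
- exact: continuous_branch_u.
- exact: continuous_branch_v.
- exact: branch_v_cvg.
- exact: branch_u_cvg.
- exact: branch_eq.
Qed.

Lemma linear_decomp {F : fieldType} {A B A' B' : F} (C C' A'' B'' C'' : F) :
  ~ parallel A B A' B' -> exists p q r,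
    (forall x y, A'' * x + B'' * y + C'' =
                 p * (A * x + B * y + C) + q * (A' * x + B' * y + C') + r) /\
    (~ parallel A B A'' B'' -> q != 0).
Proof.
move=> /eqP; rewrite -subr_eq0 => D_neq0.
exists ((A'' * B' - A' * B'') / (A * B' - A' * B)),
  ((A * B'' - A'' * B) / (A * B' - A' * B)),
  (C'' - (A'' * B' - A' * B'') / (A * B' - A' * B) * C
       - (A * B'' - A'' * B) / (A * B' - A' * B) * C').
split=> [x y|npar]; first by field.
by rewrite mulf_neq0 ?invr_eq0 // subr_eq0; apply/eqP.
Qed.

Section Asymptote.
Context {R : realType}.

Lemma asymptotic_to_line_coords {F : {poly {poly R}}} {A B C A' B' C' : R}
    {u v : R -> R} :
  ~ parallel A B A' B' -> continuous u -> continuous v ->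
  v x @[x --> +oo] --> +oo -> u x @[x --> +oo] --> 0 ->
  (forall x y t, A * x + B * y + C = u t -> A' * x + B' * y + C' = v t ->
     eval2 F x y = 0) ->
  asymptotic_to_line F A B C.
Proof.
move=> /eqP; rewrite -subr_eq0 => D_neq0 cu cv v_cvg u_cvg F_uv.
set D := A * B' - A' * B in D_neq0.
have cramer (p q r s : R) (w z : R -> R) : continuous w -> continuous z ->
    continuous (fun t => (p * (w t - q) - r * (z t - s)) / D).
  move=> cw cz t; have cst (k : R) : continuous (fun _ : R => k) by move=> ?; exact: cst_continuous.
  exact: continuousM (continuousD (continuousM (cst p t) (continuousD (cw t) (cst (- q) t)))
    (continuousN (continuousM (cst r t) (continuousD (cz t) (cst (- s) t))))) (cst D^-1 t).
pose gx t := (B' * (u t - C) - B * (v t - C')) / D.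
pose gy t := (A * (v t - C') - A' * (u t - C)) / D.
have gU t : A * gx t + B * gy t + C = u t by rewrite /gx /gy /D; field.
have gV t : A' * gx t + B' * gy t + C' = v t by rewrite /gx /gy /D; field.
exists gx, gy; split; first exact: cramer B' C B C' u v cu cv.
split; first exact: cramer A C' A' C v u cv cu.
split; first by move=> t; apply: F_uv.
split.
  set K := `|A'| + `|B'| + 1.
  have K_gt0 : 0 < K by rewrite /K ltr_pwDr ?addr_ge0.
  apply/cvgryPge => M; apply: filterS ((cvgryPge v).1 v_cvg (K * M + `|C'|)) => t vt_ge.
  have v_le : v t <= K * (`|gx t| + `|gy t|) + `|C'|.
    rewrite -gV; have := ler_norm (A' * gx t); have := ler_norm (B' * gy t).
    have := ler_norm C'; have := normr_ge0 (gx t); have := normr_ge0 (gy t).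
    have := normr_ge0 A'; have := normr_ge0 B'; rewrite !normrM /K; nra.
  by rewrite -(ler_pM2l K_gt0); lra.
have -> : (fun t => dist_line A B C (gx t) (gy t)) =
    (fun t => `|u t| * (Num.sqrt (A ^+ 2 + B ^+ 2))^-1).
  by apply/funext => t; rewrite /dist_line gU.
rewrite -(mul0r (Num.sqrt (A ^+ 2 + B ^+ 2))^-1) -(@normr0 _ R).
exact: cvgMr_tmp (cvg_norm u_cvg).
Qed.

Lemma asymptotic_to_line_cubic (A B C A' B' C' A'' B'' C'' A4 B4 C4 : R) :
  ~ parallel A B A' B' -> ~ parallel A B A'' B'' ->
  asymptotic_to_line (linpoly A B C * linpoly A' B' C' * linpoly A'' B'' C''
                      + linpoly A4 B4 C4) A B C.
Proof.
move=> np' np''.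
have [p [q [r [L''E q_neq0]]]] := linear_decomp C C' A'' B'' C'' np'.
have [d [e [g [L4E _]]]] := linear_decomp C C' A4 B4 C4 np'.
have [u [v [cu cv v_cvg u_cvg uv_eq]]] := exists_cubic_branch p q r d e g (q_neq0 np'').
apply: (asymptotic_to_line_coords (C' := C') np' cu cv v_cvg u_cvg) => x y t Lu L'v.
by rewrite eval2D !eval2M !eval2_linpoly L''E L4E Lu L'v -(uv_eq t); ring.
Qed.

End Asymptote.

Lemma parallel_sym {R : nzRingType} (A B A' B' : R) :
  parallel A B A' B' -> parallel A' B' A B.
Proof. by move/esym. Qed.

Theorem lemma4 (R : realType)
  (A1 B1 C1 A2 B2 C2 A3 B3 C3 A4 B4 C4 : R)
  (nz1 : (A1, B1) != (0, 0)) (nz2 : (A2, B2) != (0, 0))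
  (nz3 : (A3, B3) != (0, 0)) (nz4 : (A4, B4) != (0, 0))
  (d12 : line A1 B1 C1 <> line A2 B2 C2) (d13 : line A1 B1 C1 <> line A3 B3 C3)
  (d14 : line A1 B1 C1 <> line A4 B4 C4) (d23 : line A2 B2 C2 <> line A3 B3 C3)
  (d24 : line A2 B2 C2 <> line A4 B4 C4) (d34 : line A3 B3 C3 <> line A4 B4 C4)
  (np12 : ~ parallel A1 B1 A2 B2) (np13 : ~ parallel A1 B1 A3 B3)
  (np23 : ~ parallel A2 B2 A3 B3)
  (np41 : ~ parallel A4 B4 A1 B1) (np42 : ~ parallel A4 B4 A2 B2) :
  let f := linpoly A1 B1 C1 * linpoly A2 B2 C2 * linpoly A3 B3 C3
           + linpoly A4 B4 C4 in
  irreducible2 f /\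
  asymptotic_to_line f A1 B1 C1 /\
  asymptotic_to_line f A2 B2 C2 /\
  asymptotic_to_line f A3 B3 C3.
Proof.
move=> f; split; first exact: irreducible2_cubic_lines_general.
have np21 : ~ parallel A2 B2 A1 B1 by move/parallel_sym.
have np31 : ~ parallel A3 B3 A1 B1 by move/parallel_sym.
have np32 : ~ parallel A3 B3 A2 B2 by move/parallel_sym.
split; first exact: asymptotic_to_line_cubic.
split; first by rewrite /f [linpoly A1 _ _ * _]mulrC; exact: asymptotic_to_line_cubic.
by rewrite /f [_ * linpoly A3 _ _]mulrC mulrA; exact: asymptotic_to_line_cubic.
Qed.
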